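(* For every integer $v\ge 1$, with $\partial_z=d/dz$, $$\prod_{n=1}^{v-1}\left(\partial_z^2+4n^2\right)\csc^2 z=(2v-1)!\,\csc^{2v}z .$$ (For $v=1$ the product is empty and the identity reads $\csc^2 z=\csc^2 z$.)
   Context: The identity is between functions of a real (or complex) variable $z$ away from the zeros of $\sin z$. The operators $\partial_z^2+4n^2$ commute, so the order of the product is irrelevant. *)

From Stdlib Require Import Reals Arith Factorial.
Open Scope R_scope.

Definition dom (z : R) : Prop := sin z <> 0.

Definition csc2 (z : R) : R := / (sin z ^ 2).

Definition second_deriv_on (f h : R -> R) : Prop :=
  exists f' : R -> R, forall x, dom x ->
    derivable_pt_lim f x (f' x) /\ derivable_pt_lim f' x (h x).

Definition op_step (c : R) (f g : R -> R) : Prop :=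
  exists h, second_deriv_on f h /\ forall x, dom x -> g x = h x + c * f x.

(* prod_rel m f g : g = prod_{n=1}^{m} (d^2/dz^2 + 4 n^2) f on dom. *)
Fixpoint prod_rel (m : nat) (f g : R -> R) : Prop :=
  match m with
  | O => forall x, dom x -> g x = f x
  | S k => exists h, prod_rel k f h /\ op_step (4 * INR (S k) ^ 2) h g
  end.

(* With [cscn n := 1 / sin^n], differentiating twice and using [cos^2 = 1 - sin^2]
   gives [(d^2/dz^2 + n^2) cscn n = n (n + 1) cscn (n + 2)]; applied with
   [n = 2, 4, ..., 2v - 2] this turns [csc^2] into [(2v - 1)! csc^(2v)].  The operator
   relations only involve derivatives on the open set [sin z <> 0], where derivatives
   are unique, so every [g] related to [csc^2] agrees with that function there. *)
From Stdlib Require Import Reals Arith Factorial Lra Lia.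
From Coquelicot Require Import Coquelicot.
Open Scope R_scope.

Definition cscn (n : nat) (z : R) : R := / sin z ^ n.

Lemma is_derive_eq_r (f : R -> R) x l l' : is_derive f x l -> l = l' -> is_derive f x l'.
Proof. now intros H <-. Qed.

Lemma is_derive_cscn n z : sin z <> 0 ->
  is_derive (cscn n) z (- INR n * (cos z * cscn (S n) z)).
Proof.
  intros Hz; unfold cscn.
  assert (Hzn : sin z ^ n <> 0) by now apply pow_nonzero.
  eapply is_derive_eq_r.
  - apply (is_derive_inv (fun t => sin t ^ n)); [|exact Hzn].
    apply is_derive_pow, is_derive_sin.
  - destruct n as [|n]; simpl pred; [simpl; field; auto|].
    assert (Hzn' : sin z ^ n <> 0) by now apply pow_nonzero.
    simpl; field; auto.
Qed.

Lemma is_derive_cscn_deriv n z : sin z <> 0 ->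
  is_derive (fun t => - INR n * (cos t * cscn (S n) t)) z
    (INR n * INR (S n) * cscn (S (S n)) z - INR n ^ 2 * cscn n z).
Proof.
  intros Hz.
  eapply is_derive_eq_r.
  - apply (is_derive_scal (fun t => cos t * cscn (S n) t)).
    apply (is_derive_mult cos (cscn (S n))).
    + apply is_derive_cos.
    + now apply is_derive_cscn.
    + intros; apply Rmult_comm.
  - rewrite S_INR; unfold cscn, plus, mult; simpl.
    assert (Hzn : sin z ^ n <> 0) by now apply pow_nonzero.
    assert (Hcos2 : cos z * cos z = 1 - sin z * sin z).
    { pose proof (sin2_cos2 z); unfold Rsqr in *; lra. }
    transitivity (INR n * / sin z ^ n
      + INR n * (INR n + 1) * ((cos z * cos z) * / (sin z * (sin z * sin z ^ n)))).
    { field; auto. }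
    rewrite Hcos2; field; auto.
Qed.

Lemma locally_dom x : dom x -> locally x dom.
Proof.
  intros Hx.
  assert (Hsin : filterlim sin (locally x) (locally (sin x))).
  { apply (ex_derive_continuous sin x); auto_derive; auto. }
  apply (Hsin (fun y => y <> 0)).
  assert (Hpos : 0 < Rabs (sin x)) by now apply Rabs_pos_lt.
  exists (mkposreal _ Hpos); intros y Hy Hy0.
  change (Rabs (y - sin x) < Rabs (sin x)) in Hy.
  rewrite Hy0, Rminus_0_l, Rabs_Ropp in Hy; lra.
Qed.

Lemma derivable_pt_lim_unique_on_dom (f g : R -> R) x l l' :
  (forall y, dom y -> f y = g y) -> dom x ->
  derivable_pt_lim f x l -> derivable_pt_lim g x l' -> l = l'.
Proof.
  intros Hfg Hx Hf Hg.
  apply is_derive_Reals in Hf; apply is_derive_Reals in Hg.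
  apply (is_derive_ext_loc f g) in Hf.
  - now rewrite <- (is_derive_unique _ _ _ Hf), <- (is_derive_unique _ _ _ Hg).
  - apply (filter_imp dom); [exact Hfg | now apply locally_dom].
Qed.

Lemma second_deriv_on_unique f1 f2 h1 h2 :
  (forall x, dom x -> f1 x = f2 x) ->
  second_deriv_on f1 h1 -> second_deriv_on f2 h2 ->
  forall x, dom x -> h1 x = h2 x.
Proof.
  intros Hf [f1' Hd1] [f2' Hd2] x Hx.
  assert (Hf' : forall y, dom y -> f1' y = f2' y).
  { intros y Hy.
    exact (derivable_pt_lim_unique_on_dom f1 f2 y _ _ Hf Hy
             (proj1 (Hd1 y Hy)) (proj1 (Hd2 y Hy))). }
  exact (derivable_pt_lim_unique_on_dom f1' f2' x _ _ Hf' Hx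
           (proj2 (Hd1 x Hx)) (proj2 (Hd2 x Hx))).
Qed.

Lemma op_step_unique c f1 f2 g1 g2 :
  (forall x, dom x -> f1 x = f2 x) ->
  op_step c f1 g1 -> op_step c f2 g2 ->
  forall x, dom x -> g1 x = g2 x.
Proof.
  intros Hf [h1 [Hh1 Hg1]] [h2 [Hh2 Hg2]] x Hx.
  rewrite Hg1, Hg2, Hf by exact Hx.
  now rewrite (second_deriv_on_unique f1 f2 h1 h2 Hf Hh1 Hh2 x Hx).
Qed.

Lemma prod_rel_unique m f g1 g2 :
  prod_rel m f g1 -> prod_rel m f g2 -> forall x, dom x -> g1 x = g2 x.
Proof.
  revert g1 g2; induction m as [|m IH]; intros g1 g2 Hg1 Hg2 x Hx.
  - now rewrite Hg1, Hg2.
  - destruct Hg1 as [h1 [Hh1 Hs1]], Hg2 as [h2 [Hh2 Hs2]].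
    exact (op_step_unique _ h1 h2 g1 g2 (IH h1 h2 Hh1 Hh2) Hs1 Hs2 x Hx).
Qed.

Lemma op_step_ext c f g g' :
  (forall x, dom x -> g x = g' x) -> op_step c f g -> op_step c f g'.
Proof.
  intros Hg [h [Hh Hgh]]; exists h; split; [exact Hh|].
  intros x Hx; rewrite <- Hg by exact Hx; exact (Hgh x Hx).
Qed.

Lemma op_step_cscn a n :
  op_step (INR n ^ 2) (fun z => a * cscn n z)
    (fun z => a * (INR n * INR (S n)) * cscn (S (S n)) z).
Proof.
  exists (fun z => a * (INR n * INR (S n) * cscn (S (S n)) z - INR n ^ 2 * cscn n z)).
  split.
  - exists (fun z => a * (- INR n * (cos z * cscn (S n) z))); intros x Hx; split.
    + apply is_derive_Reals, is_derive_scal; now apply is_derive_cscn.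
    + apply is_derive_Reals, is_derive_scal; now apply is_derive_cscn_deriv.
  - intros x _; ring.
Qed.

Lemma prod_rel_csc2 k :
  prod_rel k csc2 (fun z => INR (fact (2 * k + 1)) * cscn (2 * k + 2) z).
Proof.
  induction k as [|k IH].
  - intros x _; unfold csc2, cscn; simpl; ring.
  - exists (fun z => INR (fact (2 * k + 1)) * cscn (2 * k + 2) z); split; [exact IH|].
    replace (4 * INR (S k) ^ 2) with (INR (2 * k + 2) ^ 2)
      by (rewrite S_INR, plus_INR, mult_INR; simpl; ring).
    eapply op_step_ext; [|apply op_step_cscn].
    intros x _.
    replace (2 * S k + 1)%nat with (S (S (2 * k + 1))) by lia.
    replace (2 * S k + 2)%nat with (S (S (2 * k + 2))) by lia.
    rewrite 2!fact_simpl, 2!mult_INR.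
    replace (S (2 * k + 2)) with (S (S (2 * k + 1))) by lia.
    replace (2 * k + 2)%nat with (S (2 * k + 1)) by lia.
    ring.
Qed.

Theorem mainTheorem1 (v : nat) (hv : (1 <= v)%nat) :
  (exists g : R -> R, prod_rel (v - 1) csc2 g) /\
  (forall g : R -> R, prod_rel (v - 1) csc2 g ->
     forall z : R, sin z <> 0 ->
       g z = INR (fact (2 * v - 1)) * / (sin z ^ (2 * v))).
Proof.
  pose proof (prod_rel_csc2 (v - 1)) as Hcsc.
  replace (2 * (v - 1) + 1)%nat with (2 * v - 1)%nat in Hcsc by lia.
  replace (2 * (v - 1) + 2)%nat with (2 * v)%nat in Hcsc by lia.
  split.
  - eexists; exact Hcsc.
  - intros g Hg z Hz; exact (prod_rel_unique _ _ _ _ Hg Hcsc z Hz).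
Qed.
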